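(* Let $P=(|P|,\preccurlyeq)$ be a finite poset and $S\subseteq|P|$ a chain. Then there is a partial ordering $\preccurlyeq'$ on $|P|$ extending $\preccurlyeq$ (i.e. $x\preccurlyeq y\Rightarrow x\preccurlyeq' y$) such that $|P|\setminus S$ is a chain under $\preccurlyeq'$, and every element of $|P|$ that is $\preccurlyeq$-incomparable with at least one element of $S$ is also $\preccurlyeq'$-incomparable with at least one element of $S$. *)

From mathcomp Require Import all_boot.
Set Implicit Arguments. Unset Strict Implicit. Unset Printing Implicit Defensive.

Definition partial_order (T : Type) (le : rel T) : Prop :=
  [/\ reflexive le, antisymmetric le & transitive le].

Definition chain (T : finType) (le : rel T) (S : {set T}) : Prop :=
  {in S &, forall x y, le x y || le y x}.

Definition incomparable (T : Type) (le : rel T) (x y : T) : bool :=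
  ~~ (le x y || le y x).

From mathcomp Require Import all_boot zify.
Set Implicit Arguments. Unset Strict Implicit. Unset Printing Implicit Defensive.

(* Glue a linear order on the complement of S into the poset: x <=' y iff
   x <= y, or x <= z and w <= y for some z, w outside S whose keys satisfy
   key z <= key w.  Because the key is a linear extension of <=, this is a
   partial order.  The key compares elements first by their down-set in S and
   then by their up-set in S (reversed).  If x is incomparable with some
   element of S, let m be the least element of S not below x.  A glued path
   from m to x would put m below x; a glued path from x to m either puts m in
   the up-set of x or passes through an element of S below m, forcing the
   intermediate w outside S to equal m. *)

Lemma leq_radix N a a' b b' : b' < N -> a * N + b <= a' * N + b' -> a <= a'.
Proof. by move=> *; nia. Qed.

Lemma ltn_radix N a a' b b' : b < N -> a < a' -> a * N + b < a' * N + b'.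
Proof. by move=> *; nia. Qed.

Lemma nested_card_subset (T : finType) (A B : {set T}) :
  A \subset B \/ B \subset A -> #|A| <= #|B| -> A \subset B.
Proof.
case=> // sBA leAB; have [_ <-] := subset_leqif_card sBA.
by rewrite eqn_leq leAB subset_leq_card.
Qed.

Lemma partial_order_dual (T : Type) (le : rel T) :
  partial_order le -> partial_order (fun x y => le y x).
Proof.
case=> le_refl le_anti le_trans; split=> // [x y /andP[lexy leyx] | y x z leyx lezy].
  by apply: le_anti; rewrite lexy leyx.
exact: le_trans lezy leyx.
Qed.

Lemma chain_dual (T : finType) (le : rel T) (S : {set T}) :
  chain le S -> chain (fun x y => le y x) S.
Proof. by move=> S_chain x y xS yS; rewrite orbC; apply: S_chain. Qed.

Definition ideal (T : finType) (le : rel T) (x : T) := [set y | le y x].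

Lemma card_ideal_lt (T : finType) (le : rel T) x y : partial_order le ->
  le x y -> x != y -> #|ideal le x| < #|ideal le y|.
Proof.
case=> le_refl le_anti le_trans lexy neqxy; apply: proper_card; apply/properP; split.
  by apply/subsetP => z; rewrite !inE => lezx; apply: le_trans lexy.
exists y; rewrite !inE ?le_refl //; apply: contra neqxy => leyx.
by apply/eqP/le_anti; rewrite lexy leyx.
Qed.

Section Below.

Variables (T : finType) (le : rel T).
Hypothesis le_trans : transitive le.

Definition below (S : {set T}) (x : T) := [set s in S | le s x].

Lemma below_mono S x y : le x y -> below S x \subset below S y.
Proof.
by move=> lexy; apply/subsetP => s; rewrite !inE => /andP[-> lesx]; apply: le_trans lexy.
Qed.

Lemma below_nested S x y : chain le S ->
  below S x \subset below S y \/ below S y \subset below S x.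
Proof.
move=> S_chain; have [|/subsetPn[s]] := boolP (below S x \subset below S y); first by left.
rewrite !inE => /andP[sS lesx] /nandP[/negP// | nlesy]; right.
apply/subsetP => t; rewrite !inE => /andP[tS letx]; rewrite tS.
case/orP: (S_chain _ _ sS tS) => [lest | lets]; last exact: le_trans lesx.
by rewrite (le_trans lest letx) in nlesy.
Qed.

(* [above S x] is [below S x] for the dual order, which is how its properties are derived. *)
Definition above (S : {set T}) (x : T) := [set s in S | le x s].

End Below.

Section Glue.

Variables (T : finType) (le : rel T) (k : T -> nat) (C : {set T}).

Definition glue (x y : T) : bool :=
  le x y || [exists z in C, exists w in C, [&& le x z, k z <= k w & le w y]].

Lemma glueP x y :
  reflect (le x y \/ exists z w, [/\ z \in C, w \in C, le x z, k z <= k w & le w y])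
          (glue x y).
Proof.
apply: (iffP orP) => -[lexy | glued]; [by left | right | by left | right].
  case/existsP: glued => z /andP[zC /existsP[w /and4P[wC lexz kzw lewy]]].
  by exists z, w.
case: glued => z [w [zC wC lexz kzw lewy]].
by apply/existsP; exists z; rewrite zC; apply/existsP; exists w; rewrite wC lexz kzw.
Qed.

Hypotheses (le_po : partial_order le) (k_mono : {homo k : x y / le x y >-> x <= y})
  (k_inj : injective k).

Lemma le_glue x y : le x y -> glue x y.
Proof. by move=> lexy; apply/glueP; left. Qed.

Lemma glue_key x y : glue x y -> k x <= k y.
Proof.
case/glueP => [/k_mono // | [z [w [_ _ /k_mono kxz kzw /k_mono kwy]]]].
exact: leq_trans kxz (leq_trans kzw kwy).
Qed.

Lemma glue_partial_order : partial_order glue.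
Proof.
have [le_refl _ le_trans] := le_po; split.
- by move=> x; apply: le_glue.
- move=> x y /andP[/glue_key kxy /glue_key kyx]; apply: k_inj.
  by apply/eqP; rewrite eqn_leq kxy kyx.
move=> y x z /glueP[lexy | [z1 [w1 [z1C w1C lexz1 kzw1 lew1y]]]].
  case/glueP => [leyz | [z2 [w2 [z2C w2C leyz2 kzw2 lew2z]]]].
    exact/le_glue/(le_trans _ _ _ lexy leyz).
  by apply/glueP; right; exists z2, w2; split=> //; apply: le_trans leyz2.
case/glueP => [leyz | [z2 [w2 [z2C w2C leyz2 kzw2 lew2z]]]].
  by apply/glueP; right; exists z1, w1; split=> //; apply: le_trans leyz.
apply/glueP; right; exists z1, w2; split=> //.
by rewrite (leq_trans kzw1) // (leq_trans _ kzw2) // k_mono // (le_trans _ _ _ lew1y).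
Qed.

Lemma glue_chain : chain glue C.
Proof.
have [le_refl _ _] := le_po.
move=> x y xC yC; apply/orP; case: (leqP (k x) (k y)) => [kxy | /ltnW kyx].
  by left; apply/glueP; right; exists x, y.
by right; apply/glueP; right; exists y, x.
Qed.

End Glue.

Section ChainKey.

Variables (T : finType) (le : rel T) (S : {set T}).
Hypotheses (le_po : partial_order le) (S_chain : chain le S).

(* Lexicographic in (#|below x|, #|~: above x|, #|ideal x|, enum_rank x), each
   component being smaller than the radix; the last two components make the key
   strictly monotone and injective. *)
Definition chain_key (x : T) : nat :=
  ((#|below le S x| * #|T|.+1 + #|~: above le S x|) * #|T|.+1 + #|ideal le x|) * #|T|
    + enum_rank x.

Lemma chain_key_inj : injective chain_key.
Proof.
move=> x y /(congr1 (modn^~ #|T|)); rewrite !modnMDl !modn_small ?ltn_ord //.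
by move/val_inj/enum_rank_inj.
Qed.

Lemma above_anti x y : le x y -> above le S y \subset above le S x.
Proof. by have [_ _ le_trans] := partial_order_dual le_po; apply: (below_mono le_trans). Qed.

Lemma chain_key_mono : {homo chain_key : x y / le x y >-> x <= y}.
Proof.
have [_ _ le_trans] := le_po.
move=> x y lexy; have [-> // | neqxy] := eqVneq x y.
have le_below : #|below le S x| <= #|below le S y|.
  by rewrite subset_leq_card // below_mono.
have le_above : #|~: above le S x| <= #|~: above le S y|.
  by rewrite subset_leq_card // setCS above_anti.
have lt_ideal := card_ideal_lt le_po lexy neqxy.
by apply/ltnW/ltn_radix; [exact: ltn_ord | nia].
Qed.

Lemma chain_key_card x y : chain_key x <= chain_key y ->
  #|below le S x| <= #|below le S y| /\
  (#|below le S x| = #|below le S y| -> #|~: above le S x| <= #|~: above le S y|).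
Proof.
have card_lt (A : {set T}) : #|A| < #|T|.+1 by rewrite ltnS max_card.
move/leq_radix => /(_ (ltn_ord _))/leq_radix => /(_ (card_lt _)) key_le.
split; first exact: leq_radix (card_lt _) key_le.
by move=> eq_below; move: key_le; rewrite eq_below leq_add2l.
Qed.

Lemma chain_key_below x y : chain_key x <= chain_key y ->
  below le S x \subset below le S y.
Proof.
have [_ _ le_trans] := le_po.
case/chain_key_card => le_card _.
exact: nested_card_subset (below_nested le_trans _ _ S_chain) le_card.
Qed.

Lemma chain_key_above x y : chain_key x <= chain_key y ->
  below le S y \subset below le S x -> above le S y \subset above le S x.
Proof.
case/chain_key_card => le_card le_card_above below_yx.
have [_ _ le_trans] := partial_order_dual le_po.
rewrite -setCS; apply: nested_card_subset; last first.
  by apply: le_card_above; apply/eqP; rewrite eqn_leq le_card subset_leq_card.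
by rewrite !setCS; case: (below_nested le_trans x y (chain_dual S_chain)); [right | left].
Qed.

End ChainKey.

Section Incomparable.

Variables (T : finType) (le : rel T) (S : {set T}) (k : T -> nat).
Hypotheses (le_po : partial_order le) (S_chain : chain le S)
  (k_mono : {homo k : x y / le x y >-> x <= y}) (k_inj : injective k).
Hypothesis k_below : forall x y, k x <= k y -> below le S x \subset below le S y.
Hypothesis k_above : forall x y, k x <= k y ->
  below le S y \subset below le S x -> above le S y \subset above le S x.

Lemma exists_least_not_below x s : s \in S -> ~~ le s x ->
  exists m, [/\ m \in S, ~~ le m x & forall t, t \in S -> ~~ le t x -> le m t].
Proof.
have [le_refl _ _] := le_po; move=> sS nlesx.
case: (@arg_minnP _ s (fun t => (t \in S) && ~~ le t x) k); first by rewrite sS.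
move=> m /andP[mS nlemx] m_min; exists m; split=> // t tS nletx.
case/orP: (S_chain mS tS) => // letm.
have kmt : k m <= k t by apply: m_min; rewrite tS.
suff -> : t = m by [].
by apply: k_inj; apply/eqP; rewrite eqn_leq k_mono.
Qed.

Lemma glue_incomparable x s : s \in S -> incomparable le x s ->
  exists2 m, m \in S & incomparable (glue le k (~: S)) x m.
Proof.
have [_ le_anti le_trans] := le_po.
rewrite /incomparable negb_or => sS /andP[nlexs nlesx].
have [m [mS nlemx m_least]] := exists_least_not_below sS nlesx.
have nlexm : ~~ le x m.
  by apply: contra nlexs => lexm; apply: le_trans lexm (m_least _ sS nlesx).
exists m => //; rewrite negb_or; apply/andP; split; apply/negP.
  case/glueP=> [lexm | [z [w [_ wnS lexz kzw lewm]]]]; first by rewrite lexm in nlexm.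
  have kxw : k x <= k w by rewrite (leq_trans (k_mono lexz)).
  have [below_wx | /subsetPn[t]] := boolP (below le S w \subset below le S x).
    have := subsetP (k_above kxw below_wx) m.
    by rewrite !inE mS lewm (negbTE nlexm) => /(_ isT).
  rewrite !inE => /andP[tS letw] /nandP[/negP// | nletx].
  have letm := le_trans _ _ _ letw lewm.
  have emt : m = t by apply: le_anti; rewrite m_least.
  have ewm : w = m by apply: le_anti; rewrite lewm emt letw.
  by rewrite inE ewm mS in wnS.
case/glueP=> [lemx | [z [w [_ _ lemz kzw lewx]]]]; first by rewrite lemx in nlemx.
have kzx : k z <= k x by rewrite (leq_trans kzw) // k_mono.
have := subsetP (k_below kzx) m.
by rewrite !inE mS lemz (negbTE nlemx) => /(_ isT).
Qed.

End Incomparable.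

Theorem lemma5p4 (T : finType) (le : rel T) (hle : partial_order le)
  (S : {set T}) (hS : chain le S) :
  exists le' : rel T,
    [/\ partial_order le',
        (forall x y, le x y -> le' x y),
        chain le' (~: S)
      & forall x : T, (exists2 s, s \in S & incomparable le x s) ->
                      exists2 s, s \in S & incomparable le' x s].
Proof.
pose key := chain_key le S.
have key_mono : {homo key : x y / le x y >-> x <= y} := chain_key_mono S hle.
have key_inj : injective key := @chain_key_inj T le S.
exists (glue le key (~: S)); split.
- exact: glue_partial_order.
- exact: le_glue.
- exact: glue_chain.
- move=> x [s sS incomp_xs]; apply: glue_incomparable sS incomp_xs => //.
  + exact: chain_key_below.
  + exact: chain_key_above.
Qed.
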